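(* Let $(X,d)$ be a complete metric space and let $G:X\times X\to X$ be a mapping such that (i) $G(x,x)=x$ for all $x\in X$, and (ii) for $x,y\in X$, $G(x,y)=x$ implies $y=x$. Let $T:X\to P_{cl}(X)$ be a multivalued operator with $SFix(T)\neq\emptyset$ and let $T_G(x)=\{G(x,u):u\in T(x)\}$ be the admissible perturbation of $T$ corresponding to $G$. Suppose there exist $\alpha,\beta,\gamma\ge0$ with $\alpha+\beta+\gamma<1$ such that $$H(T_G(x),T_G(y))\le\alpha d(x,y)+\beta D(x,T_G(y))+\gamma D(y,T_G(x))\quad\text{for all }x,y\in X,$$ and that (iii) there exists $L>0$ with $D(x,T_G(x))\le L\,D(x,T(x))$ for every $x\in X$. Then the strict fixed point problem $T(x)=\{x\}$ is Ulam–Hyers stable: there exists $c>0$ such that for every $\varepsilon>0$ and every $y^*\in X$ with $D(y^*,T(y^* ))\le\varepsilon$ there exists $x^*\in SFix(T)$ with $d(y^*,x^* )\le c\varepsilon$.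
   Context: $P_{cl}(X)$ is the family of nonempty closed subsets of $X$; $SFix(T)=\{x:T(x)=\{x\}\}$. For nonempty $A,B\subseteq X$: $D(a,B)=\inf_{b\in B}d(a,b)$, $e(A,B)=\sup_{a\in A}D(a,B)$, $H(A,B)=\max\{e(A,B),e(B,A)\}$. *)

From Stdlib Require Import Reals.
From Coquelicot Require Import Coquelicot.
Open Scope R_scope.

Definition is_metric {X : Type} (d : X -> X -> R) : Prop :=
  (forall x y, 0 <= d x y) /\
  (forall x y, d x y = 0 <-> x = y) /\
  (forall x y, d x y = d y x) /\
  (forall x y z, d x z <= d x y + d y z).

Definition cauchy_seq {X : Type} (d : X -> X -> R) (u : nat -> X) : Prop :=
  forall eps, 0 < eps -> exists N, forall m n, (N <= m)%nat -> (N <= n)%nat ->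
    d (u m) (u n) < eps.

Definition seq_converges_to {X : Type} (d : X -> X -> R) (u : nat -> X) (l : X) : Prop :=
  forall eps, 0 < eps -> exists N, forall n, (N <= n)%nat -> d (u n) l < eps.

Definition complete_metric {X : Type} (d : X -> X -> R) : Prop :=
  forall u, cauchy_seq d u -> exists l, seq_converges_to d u l.

Definition closed_set {X : Type} (d : X -> X -> R) (A : X -> Prop) : Prop :=
  forall x, (forall eps, 0 < eps -> exists a, A a /\ d x a < eps) -> A x.

Definition nonempty_set {X : Type} (A : X -> Prop) : Prop := exists a, A a.

Definition in_Pcl {X : Type} (d : X -> X -> R) (A : X -> Prop) : Prop :=
  nonempty_set A /\ closed_set d A.

(* D(a,B) = inf_{b in B} d(a,b); real-valued (meaningful for nonempty B,
   where the infimum is finite since distances are >= 0) *)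
Definition Dist {X : Type} (d : X -> X -> R) (a : X) (B : X -> Prop) : R :=
  real (Glb_Rbar (fun r => exists b, B b /\ r = d a b)).

Definition excess {X : Type} (d : X -> X -> R) (A B : X -> Prop) : Rbar :=
  Lub_Rbar (fun r => exists a, A a /\ r = Dist d a B).

Definition Hausdorff {X : Type} (d : X -> X -> R) (A B : X -> Prop) : Rbar :=
  let e1 := excess d A B in let e2 := excess d B A in
  if Rbar_le_dec e1 e2 then e2 else e1.

Definition SFix {X : Type} (T : X -> X -> Prop) (x : X) : Prop :=
  forall z, T x z <-> z = x.

Definition TG {X : Type} (G : X -> X -> X) (T : X -> X -> Prop) (x : X) : X -> Prop :=
  fun z => exists u, T x u /\ z = G x u.

(* Since T(x* ) = {x* } and G(x*,x* ) = x*, also T_G(x* ) = {x* }.  For y and z in T_G(y) the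
   contraction condition at (y, x* ) gives d(z,x* ) <= H(T_G y, T_G x* )
   <= (alpha + beta) d(y,x* ) + gamma d(x*,z), and the triangle inequality through z turns
   this into (1 - alpha - beta - gamma) d(y,x* ) <= d(y,z).  Taking the infimum over z and
   using (iii), d(y,x* ) <= L D(y,T y) / (1 - alpha - beta - gamma). *)

From Stdlib Require Import Reals Lra.
From Coquelicot Require Import Coquelicot.
Open Scope R_scope.

Section Distance.

Variables (X : Type) (d : X -> X -> R).
Hypothesis d_ge0 : forall x y, 0 <= d x y.

Let dists (a : X) (B : X -> Prop) (r : R) : Prop := exists b, B b /\ r = d a b.

Lemma Glb_dists_finite (a : X) (B : X -> Prop) (b0 : X) :
  B b0 -> Glb_Rbar (dists a B) = Finite (Dist d a B).
Proof.
  intros Bb0; unfold Dist; fold (dists a B).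
  destruct (Glb_Rbar_correct (dists a B)) as [lb glb].
  assert (ge0 : Rbar_le 0 (Glb_Rbar (dists a B))).
  { apply glb; intros r [b [_ ->]]; apply d_ge0. }
  assert (le_b0 : Rbar_le (Glb_Rbar (dists a B)) (d a b0)) by (apply lb; now exists b0).
  destruct (Glb_Rbar (dists a B)); simpl in *; easy.
Qed.

Lemma Dist_le (a b : X) (B : X -> Prop) : B b -> Dist d a B <= d a b.
Proof.
  intros Bb.
  assert (le_b : Rbar_le (Glb_Rbar (dists a B)) (d a b)).
  { apply (proj1 (Glb_Rbar_correct _)); now exists b. }
  now rewrite (Glb_dists_finite a B b Bb) in le_b.
Qed.

Lemma Dist_ge (a b0 : X) (B : X -> Prop) (m : R) :
  B b0 -> (forall b, B b -> m <= d a b) -> m <= Dist d a B.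
Proof.
  intros Bb0 m_lb.
  assert (ge_m : Rbar_le m (Glb_Rbar (dists a B))).
  { apply (proj2 (Glb_Rbar_correct _)); intros r [b [Bb ->]]; now apply m_lb. }
  now rewrite (Glb_dists_finite a B b0 Bb0) in ge_m.
Qed.

Lemma Dist_singleton (a x : X) (B : X -> Prop) :
  (forall b, B b <-> b = x) -> Dist d a B = d a x.
Proof.
  intros B_x; apply Rle_antisym.
  - now apply Dist_le, B_x.
  - apply (Dist_ge a x); [now apply B_x|].
    intros b Bb; rewrite (proj1 (B_x b) Bb); apply Rle_refl.
Qed.

Lemma Dist_le_Hausdorff (A B : X -> Prop) (z : X) :
  A z -> Rbar_le (Dist d z B) (Hausdorff d A B).
Proof.
  intros Az.
  apply Rbar_le_trans with (excess d A B).
  - apply (proj1 (Lub_Rbar_correct _)); now exists z.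
  - unfold Hausdorff; destruct Rbar_le_dec; [assumption | apply Rbar_le_refl].
Qed.

End Distance.

Lemma TG_SFix {X : Type} (G : X -> X -> X) (T : X -> X -> Prop) (x : X) :
  (forall x, G x x = x) -> SFix T x -> forall b, TG G T x b <-> b = x.
Proof.
  intros G_diag Tx b; split.
  - intros [u [Tu ->]]; rewrite (proj1 (Tx u) Tu); apply G_diag.
  - intros ->; exists x; split; [now apply Tx | now rewrite G_diag].
Qed.

Section StrictFixedPointEstimate.

Variables (X : Type) (d : X -> X -> R) (G : X -> X -> X) (T : X -> X -> Prop).
Variables (alpha beta gamma : R).
Hypothesis d_metric : is_metric d.
Hypothesis G_diag : forall x, G x x = x.
Hypotheses (gamma_ge0 : 0 <= gamma) (gamma_le1 : gamma <= 1).
Hypothesis TG_contr : forall x y,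
  Rbar_le (Hausdorff d (TG G T x) (TG G T y))
          (alpha * d x y + beta * Dist d x (TG G T y) + gamma * Dist d y (TG G T x)).
Variable xs : X.
Hypothesis xs_SFix : SFix T xs.

Lemma dist_TG_SFix_le (y z : X) :
  TG G T y z -> (1 - gamma) * d z xs <= (alpha + beta) * d y xs.
Proof.
  destruct d_metric as [d_ge0 [_ [d_sym _]]].
  intros TGyz.
  pose proof (TG_SFix G T xs G_diag xs_SFix) as TGxs.
  assert (contr : Rbar_le (Dist d z (TG G T xs))
    (alpha * d y xs + beta * Dist d y (TG G T xs) + gamma * Dist d xs (TG G T y))).
  { apply Rbar_le_trans with (Hausdorff d (TG G T y) (TG G T xs)).
    - now apply Dist_le_Hausdorff.
    - apply TG_contr. }
  simpl in contr; rewrite !(Dist_singleton X d d_ge0 _ xs) in contr by exact TGxs.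
  assert (xs_near : Dist d xs (TG G T y) <= d z xs).
  { rewrite d_sym; now apply (Dist_le X d d_ge0). }
  pose proof (Rmult_le_compat_l gamma _ _ gamma_ge0 xs_near).
  lra.
Qed.

Lemma dist_SFix_le_Dist_TG (y : X) :
  (exists u, T y u) -> (1 - alpha - beta - gamma) * d y xs <= Dist d y (TG G T y).
Proof.
  destruct d_metric as [d_ge0 [_ [_ d_tri]]].
  intros [u Tyu].
  apply (Dist_ge X d d_ge0 y (G y u)); [now exists u|].
  intros z TGyz.
  pose proof (dist_TG_SFix_le y z TGyz) as near_z.
  assert (tri : (1 - gamma) * d y xs <= (1 - gamma) * (d y z + d z xs)).
  { apply Rmult_le_compat_l; [lra | apply d_tri]. }
  pose proof (Rmult_le_pos gamma (d y z) gamma_ge0 (d_ge0 y z)).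
  lra.
Qed.

End StrictFixedPointEstimate.

Theorem mainTheorem5 (X : Type) (d : X -> X -> R)
  (Hmet : is_metric d) (Hcomp : complete_metric d)
  (G : X -> X -> X)
  (HG1 : forall x, G x x = x)
  (HG2 : forall x y, G x y = x -> y = x)
  (T : X -> X -> Prop)
  (HT : forall x, in_Pcl d (T x))
  (HSF : exists x, SFix T x)
  (alpha beta gamma : R)
  (Ha : 0 <= alpha) (Hb : 0 <= beta) (Hc : 0 <= gamma)
  (Habc : alpha + beta + gamma < 1)
  (Hcontr : forall x y,
     Rbar_le (Hausdorff d (TG G T x) (TG G T y))
             (Finite (alpha * d x y + beta * Dist d x (TG G T y)
                      + gamma * Dist d y (TG G T x))))
  (HL : exists L, 0 < L /\ forall x, Dist d x (TG G T x) <= L * Dist d x (T x)) :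
  exists c, 0 < c /\
    forall eps, 0 < eps -> forall ystar,
      Dist d ystar (T ystar) <= eps ->
      exists xstar, SFix T xstar /\ d ystar xstar <= c * eps.
Proof.
  destruct HSF as [xs xs_SFix], HL as [L [L_gt0 HL]].
  set (k := 1 - alpha - beta - gamma).
  assert (k_gt0 : 0 < k) by (unfold k; lra).
  exists (L / k); split; [now apply Rdiv_lt_0_compat|].
  intros eps _ y Dy_le; exists xs; split; [assumption|].
  assert (estimate : k * d y xs <= Dist d y (TG G T y)).
  { assert (gamma_le1 : gamma <= 1) by lra.
    exact (dist_SFix_le_Dist_TG X d G T alpha beta gamma Hmet HG1 Hc gamma_le1 Hcontr
             xs xs_SFix y (proj1 (HT y))). }
  pose proof (Rmult_le_compat_l L _ _ (Rlt_le _ _ L_gt0) Dy_le).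
  apply (Rmult_le_reg_l k); [assumption|].
  replace (k * (L / k * eps)) with (L * eps) by (field; lra).
  specialize (HL y); lra.
Qed.
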